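(* Let $d\in\mathbb N\cup\{\infty\}$ and ${\boldsymbol\gamma}\in\mathcal W_d\setminus\mathcal M_d$. Then the set $\Gamma=\{\widetilde{\boldsymbol\gamma}\in\mathcal M_d:\widetilde{\boldsymbol\gamma}\le{\boldsymbol\gamma}\}$, partially ordered by componentwise $\le$, contains a maximal element.
   Context: Write $[d]=\{1,\dots,d\}$ if $d\in\mathbb N$ and $[d]=\mathbb N$ if $d=\infty$. $\mathcal U_d$ is the set of finite subsets of $[d]$; $\mathcal W_d$ is the set of families $(\gamma_u)_{u\in\mathcal U_d}$ of non-negative reals, ordered componentwise. $(\Delta_v{\boldsymbol\gamma})_u=\sum_{w\subseteq v}(-1)^{|w|}\gamma_{u\cup w}$; $\mathcal M_d$ is the set of ${\boldsymbol\gamma}\in\mathcal W_d$ with $(\Delta_v{\boldsymbol\gamma})_u\ge0$ for all $u,v\in\mathcal U_d$ (completely monotone weights). *)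

From HB Require Import structures.
From mathcomp Require Import all_boot all_order all_algebra.
From mathcomp Require Import finmap.
From mathcomp Require Import reals.
Set Implicit Arguments. Unset Strict Implicit. Unset Printing Implicit Defensive.
Import Order.TTheory GRing.Theory Num.Theory.
Local Open Scope ring_scope.
Local Open Scope fset_scope.

(* d : option nat; Some n means d = n, None means d = infinity. *)
Definition in_dim (d : option nat) (i : nat) : bool :=
  (1 <= i)%N && (if d is Some n then (i <= n)%N else true).

Definition in_Ud (d : option nat) (u : {fset nat}) : Prop :=
  forall i, i \in u -> in_dim d i.

(* Weight families are functions {fset nat} -> R; only values on U_d matter. *)
Definition in_Wd {R : realType} (d : option nat) (g : {fset nat} -> R) : Prop :=
  forall u, in_Ud d u -> 0 <= g u.

Definition leW {R : realType} (d : option nat) (g h : {fset nat} -> R) : Prop :=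
  forall u, in_Ud d u -> g u <= h u.

Definition Delta {R : realType} (g : {fset nat} -> R) (v u : {fset nat}) : R :=
  \sum_(w <- fpowerset v) (-1) ^+ #|` w| * g (u `|` w).

Definition in_Md {R : realType} (d : option nat) (g : {fset nat} -> R) : Prop :=
  in_Wd d g /\ forall u v, in_Ud d u -> in_Ud d v -> 0 <= Delta g v u.

From HB Require Import structures.
From mathcomp Require Import all_boot all_order all_algebra.
From mathcomp Require Import finmap.
From mathcomp Require Import reals.
From mathcomp Require Import boolp classical_sets wochoice.
From mathcomp Require Import lra.
Set Implicit Arguments. Unset Strict Implicit. Unset Printing Implicit Defensive.
Import Order.TTheory GRing.Theory Num.Theory.
Local Open Scope ring_scope.

(** The zero family lies in Γ, and every chain in Γ has its pointwise
    supremum in Γ, so Zorn's lemma yields a maximal element. The only point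
    is complete monotonicity of the supremum s: the value (Δ_v s)_u involves
    the finitely many values s_{u ∪ w}, w ⊆ v, and since the chain is totally
    ordered a single member of the chain approximates s at all of them at
    once; its Δ_v is nonnegative, so (Δ_v s)_u ≥ -ε for every ε > 0. *)

Section ChainSup.
Variables (R : realType) (T : eqType) (D : T -> Prop).

Definition le_on (f h : T -> R) : Prop := forall x, D x -> f x <= h x.

Definition le_onb : rel (T -> R) := fun f h => `[< le_on f h >].

Lemma le_onbP f h : reflect (le_on f h) (le_onb f h).
Proof. exact: asboolP. Qed.

Variables (C : {pred (T -> R)}) (c0 g : T -> R).
Hypotheses (c0C : c0 \in C) (C_chain : chain le_onb C).
Hypothesis C_le : forall h, h \in C -> le_on h g.

Definition chain_sup (x : T) : R :=
  sup [set y | exists2 h, h \in C & h x = y]%classic.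

Let chain_vals_has_sup {x} : D x ->
  has_sup [set y | exists2 h, h \in C & h x = y]%classic.
Proof.
move=> Dx; split; first by exists (c0 x), c0.
by exists (g x) => _ [h hC <-]; exact: C_le.
Qed.

Lemma chain_sup_ub h : h \in C -> le_on h chain_sup.
Proof.
move=> hC x Dx; apply: ub_le_sup (chain_vals_has_sup Dx).2 _ _.
by exists h.
Qed.

Lemma chain_sup_le : le_on chain_sup g.
Proof.
move=> x Dx; apply: ge_sup; first by exists (c0 x), c0.
by move=> _ [h hC <-]; exact: C_le.
Qed.

Lemma chain_sup_adherent_seq (eps : R) (r : seq T) :
  0 < eps -> (forall x, x \in r -> D x) ->
  exists2 m, m \in C & forall x, x \in r -> chain_sup x - eps < m x.
Proof.
move=> eps0; elim: r => [|x r IH] Dr; first by exists c0.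
have Dx : D x by apply: Dr; rewrite inE eqxx.
have [m mC mr] : exists2 m, m \in C &
    forall y, y \in r -> chain_sup y - eps < m y.
  by apply: IH => y yr; apply: Dr; rewrite inE yr orbT.
have [_ [h hC <-] hx] := sup_adherent eps0 (chain_vals_has_sup Dx).
have [/le_onbP hm|/le_onbP mh] := orP (C_chain hC mC).
- exists m => // y; rewrite inE => /orP[/eqP-> |]; last exact: mr.
  exact: lt_le_trans hx (hm x Dx).
- exists h => // y; rewrite inE => /orP[/eqP-> // | yr].
  by apply: lt_le_trans (mr y yr) (mh y _); apply: Dr; rewrite inE yr orbT.
Qed.

End ChainSup.

Section CompletelyMonotone.
Variables (R : realType) (d : option nat).

Lemma in_Ud_fsetU u w : in_Ud d u -> in_Ud d w -> in_Ud d (u `|` w)%fset.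
Proof. by move=> hu hw i; rewrite inE => /orP[/hu|/hw]. Qed.

Lemma in_Ud_fpowerset v w : in_Ud d v -> w \in fpowerset v -> in_Ud d w.
Proof. by move=> hv; rewrite fpowersetE => /fsubsetP wv i /wv /hv. Qed.

Lemma Delta_cst0 v u : Delta (fun=> 0 : R) v u = 0.
Proof. by rewrite /Delta big1 // => w _; rewrite mulr0. Qed.

Lemma in_Md_cst0 : in_Md d (fun=> 0 : R).
Proof. by split=> [u _ | u v _ _]; rewrite ?Delta_cst0. Qed.

Lemma Delta_dist (f h : {fset nat} -> R) v u :
  `|Delta f v u - Delta h v u|
    <= \sum_(w <- fpowerset v) `|f (u `|` w)%fset - h (u `|` w)%fset|.
Proof.
rewrite /Delta -sumrB; apply: le_trans (ler_norm_sum _ _ _) _.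
apply: ler_sum => w _.
by rewrite -mulrBr normrM normrX normrN1 expr1n mul1r.
Qed.

Variables (C : {pred ({fset nat} -> R)}) (c0 g : {fset nat} -> R).
Hypotheses (c0C : c0 \in C) (C_chain : chain (le_onb (in_Ud d)) C).
Hypotheses (C_Md : forall h, h \in C -> in_Md d h).
Hypotheses (C_le : forall h, h \in C -> leW d h g).

Lemma chain_sup_in_Md : in_Md d (chain_sup C).
Proof.
split=> [u hu | u v hu hv].
  exact: le_trans (proj1 (C_Md c0C) u hu) (chain_sup_ub c0C C_le c0C hu).
apply/ler_addgt0Pr => e e0.
set N := size (fpowerset v); set eps := e / N.+1%:R.
have eps0 : 0 < eps by rewrite divr_gt0 // ltr0n.
have in_Ud_uw w : w \in fpowerset v -> in_Ud d (u `|` w)%fset.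
  by move=> wv; apply: in_Ud_fsetU hu (in_Ud_fpowerset hv wv).
have uw_Ud x : x \in [seq (u `|` w)%fset | w <- fpowerset v] -> in_Ud d x.
  by case/mapP=> w wv ->; exact: in_Ud_uw.
have [m mC m_close] := chain_sup_adherent_seq c0C C_chain C_le eps0 uw_Ud.
have dist_le w : w \in fpowerset v ->
    `|m (u `|` w)%fset - chain_sup C (u `|` w)%fset| <= eps.
  move=> wv; have := chain_sup_ub c0C C_le mC (in_Ud_uw w wv).
  have := m_close _ (map_f (fun w => (u `|` w)%fset) wv).
  by rewrite ler_norml => *; apply/andP; split; lra.
have Delta_close : Delta m v u - Delta (chain_sup C) v u <= e.
  apply: le_trans (ler_norm _) _; apply: le_trans (Delta_dist _ _ _ _) _.
  apply: (@le_trans _ _ (\sum_(w <- fpowerset v) eps)).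
    by rewrite big_seq [leRHS]big_seq; apply: ler_sum => w /dist_le.
  rewrite big_const_seq count_predT iter_addr_0 -mulr_natr mulrAC.
  by rewrite ler_pdivrMr ?ltr0n // ler_pM2l // ler_nat; exact: leqnSn.
have := proj2 (C_Md mC) u v hu hv; lra.
Qed.

End CompletelyMonotone.

Definition Md_below (R : realType) (d : option nat) (g : {fset nat} -> R) :
  {pred ({fset nat} -> R)} := fun h => `[< in_Md d h /\ leW d h g >].

Lemma Md_belowP (R : realType) d (g h : {fset nat} -> R) :
  reflect (in_Md d h /\ leW d h g) (h \in Md_below d g).
Proof. exact: asboolP. Qed.

Lemma Md_below_chain_ub (R : realType) d (g : {fset nat} -> R)
    (C : {pred ({fset nat} -> R)}) :
  in_Wd d g -> {subset C <= Md_below d g} -> chain (le_onb (in_Ud d)) C ->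
  exists2 z, z \in Md_below d g & upper_bound (le_onb (in_Ud d)) C z.
Proof.
move=> gW CS C_chain.
have [[c0 c0C] | C0] := pselect (exists c, c \in C).
- have C_le h : h \in C -> leW d h g by move=> /CS /Md_belowP[].
  exists (chain_sup C).
    apply/Md_belowP; split; last exact: chain_sup_le c0C C_le.
    by apply: chain_sup_in_Md c0C C_chain _ C_le => h /CS /Md_belowP[].
  by move=> h hC; apply/le_onbP; exact: (chain_sup_ub (D := in_Ud d) c0C C_le hC).
- exists (fun=> 0).
    by apply/Md_belowP; split; [exact: in_Md_cst0 | move=> u /gW].
  by move=> h hC; case: C0; exists h.
Qed.

Theorem mainTheorem18 (R : realType) (d : option nat) (g : {fset nat} -> R) :
  in_Wd d g -> ~ in_Md d g ->
  exists gt : {fset nat} -> R,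
    (in_Md d gt /\ leW d gt g) /\
    (forall h : {fset nat} -> R, in_Md d h -> leW d h g -> leW d gt h -> leW d h gt).
Proof.
move=> gW _.
have [|||z /Md_belowP zS zmax] :=
  Zorn's_lemma (R := le_onb (in_Ud d)) (S := Md_below d g).
- by move=> h _; apply/le_onbP.
- move=> h2 h1 h3 _ _ _ /le_onbP h12 /le_onbP h23; apply/le_onbP => u hu.
  exact: le_trans (h12 u hu) (h23 u hu).
- by move=> C CS /wo_chainW; exact: Md_below_chain_ub.
exists z; split=> // h hM hg hz; apply/le_onbP/zmax; first exact/Md_belowP.
exact/le_onbP.
Qed.
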